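(* Let $n=n_1+n_2+n_3=p+q$ with positive integers, let $G=U(n)$, let $L=U(n_1)\times U(n_2)\times U(n_3)$ and $H=U(p)\times U(q)$ be the natural block-diagonal subgroups of $G$, and let $G'=O(n)$. If $\min(p,q)\ge 3$ and $\min(n_1,n_2,n_3)\ge 2$, then $LG'H\subsetneq G$.
   Context: $LG'H=\{xyz:x\in L,y\in G',z\in H\}$. *)

From HB Require Import structures.
From mathcomp Require Import all_boot all_order all_algebra.
From mathcomp Require Import reals.
From mathcomp Require Import complex.
Set Implicit Arguments. Unset Strict Implicit. Unset Printing Implicit Defensive.
Import Order.TTheory GRing.Theory Num.Theory.
Local Open Scope ring_scope.

Definition adjmx (R : realType) m n (M : 'M[R[i]]_(m, n)) : 'M[R[i]]_(n, m) :=
  (map_mx (@conjc R) M)^T.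

Definition unitary_mx (R : realType) n (M : 'M[R[i]]_n) : Prop :=
  M *m adjmx M = 1%:M.

Definition in_On (R : realType) n (M : 'M[R[i]]_n) : Prop :=
  exists Q : 'M[R]_n, Q *m Q^T = 1%:M /\ M = map_mx (fun x : R => x%:C%C) Q.

Definition in_L (R : realType) (n1 n2 n3 n : nat) (e : (n1 + n2 + n3 = n)%N)
  (M : 'M[R[i]]_n) : Prop :=
  exists (A : 'M[R[i]]_n1) (B : 'M[R[i]]_n2) (C : 'M[R[i]]_n3),
    [/\ unitary_mx A, unitary_mx B, unitary_mx C &
      M = castmx (e, e) (block_mx (block_mx A 0 0 B) 0 0 C)].

Definition in_H (R : realType) (p q n : nat) (e : (p + q = n)%N)
  (M : 'M[R[i]]_n) : Prop :=
  exists (A : 'M[R[i]]_p) (B : 'M[R[i]]_q),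
    [/\ unitary_mx A, unitary_mx B & M = castmx (e, e) (block_mx A 0 0 B)].

From mathcomp Require Import all_boot all_order all_algebra all_fingroup.
From mathcomp Require Import reals complex.
From mathcomp Require Import ring zify.
Set Implicit Arguments. Unset Strict Implicit. Unset Printing Implicit Defensive.
Import Order.TTheory GRing.Theory Num.Theory.
Local Open Scope ring_scope.

(* If g = x y z with x in L, y in O(n) and z in H, then A := z^-1 (z^-1)^T is
   unitary and block diagonal for (p, q), while g A g^T = x y y^T x^T = x x^T is
   block diagonal for (n1, n2, n3).  The witness g is, up to permutations of
   rows and columns, the direct sum of a scaled 6 x 6 complex Hadamard matrix M
   and an identity matrix, with M placed on two rows of each L-block and three
   columns of each H-block.  For such g the two block conditions force, through
   explicit linear certificates over Q(i), a whole row of A to vanish, which is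
   impossible for a unitary A. *)

Lemma perm_extend_seq (T : finType) (xs ys : seq T) :
  uniq xs -> uniq ys -> size xs = size ys ->
  exists s : {perm T}, map s xs = ys.
Proof.
elim: xs ys => [|x xs IH] [|y ys] //=; first by exists 1%g.
case/andP=> xs'x uniq_xs /andP[ys'y uniq_ys] [size_xs].
have [s sxs] := IH ys uniq_xs uniq_ys size_xs.
exists (s * tperm (s x) y)%g; rewrite permM tpermL -sxs; congr (_ :: _).
apply/eq_in_map => z xs_z; rewrite permM tpermD //.
  by rewrite (inj_eq perm_inj); apply: contraNneq xs'x => ->.
by apply: contraNneq ys'y => ->; rewrite -sxs map_f.
Qed.

Lemma perm_extend_inj (T : finType) k (f g : 'I_k -> T) :
  injective f -> injective g -> exists s : {perm T}, forall i, s (f i) = g i.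
Proof.
move=> f_inj g_inj.
have [|||s sf] := @perm_extend_seq T (map f (enum 'I_k)) (map g (enum 'I_k)).
- by rewrite map_inj_uniq ?enum_uniq.
- by rewrite map_inj_uniq ?enum_uniq.
- by rewrite !size_map.
rewrite -map_comp in sf; exists s => i.
by have /eq_in_map/(_ i) := sf; rewrite mem_enum; apply.
Qed.

Definition block_diagonal (K : nmodType) (T : eqType) n (P : 'I_n -> T)
    (M : 'M[K]_n) :=
  forall k l, P k != P l -> M k l = 0.

Lemma block_diagonal_mul (K : pzSemiRingType) (T : eqType) n (P : 'I_n -> T)
    (A B : 'M[K]_n) :
  block_diagonal P A -> block_diagonal P B -> block_diagonal P (A *m B).
Proof.
move=> dA dB k l Pkl; rewrite mxE big1 // => c _.
have [Pkc|Pkc] := eqVneq (P k) (P c); last by rewrite dA ?mul0r.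
by rewrite dB ?mulr0 // -Pkc.
Qed.

Lemma block_diagonal_tr (K : nmodType) (T : eqType) n (P : 'I_n -> T)
    (A : 'M[K]_n) :
  block_diagonal P A -> block_diagonal P A^T.
Proof. by move=> dA k l Pkl; rewrite mxE dA // eq_sym. Qed.

Lemma block_diagonal_perm (K : nmodType) (T : eqType) n (P : 'I_n -> T)
    (s : {perm 'I_n}) (A : 'M[K]_n) :
  block_diagonal P A -> block_diagonal (P \o s) (row_perm s (col_perm s A)).
Proof. by move=> dA k l Pkl; rewrite !mxE dA. Qed.

Lemma row_col_perm_conj (K : pzSemiRingType) n (W A : 'M[K]_n)
    (s t : {perm 'I_n}) :
  let g := row_perm s (col_perm t W) in
  row_perm s^-1 (col_perm s^-1 (g *m A *m g^T)) =
    W *m row_perm t^-1 (col_perm t^-1 A) *m W^T.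
Proof.
apply/matrixP => k l; rewrite !mxE [RHS](reindex_inj (@perm_inj _ t)).
apply: eq_bigr => b _; rewrite !mxE !permKV; congr (_ * _).
rewrite [RHS](reindex_inj (@perm_inj _ t)).
by apply: eq_bigr => a _; rewrite !mxE !permKV !permK.
Qed.

Lemma block_diagonal_castmx (K : nmodType) (T : eqType) (P : nat -> T) m n
    (e : m = n) (A : 'M[K]_m) :
  block_diagonal (fun k : 'I_m => P k) A ->
  block_diagonal (fun k : 'I_n => P k) (castmx (e, e) A).
Proof. by move=> dA k l Pkl; rewrite castmxE dA. Qed.

Lemma block_diagonal_block_mx (K : nmodType) p q (A : 'M[K]_p) (B : 'M[K]_q) :
  block_diagonal (fun k : 'I_(p + q) => (k < p)%N) (block_mx A 0 0 B).
Proof.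
move=> k l; case: (split_ordP k) => {}k ->; case: (split_ordP l) => {}l ->;
  by rewrite /= ?ltn_ord ?ltnNge ?leq_addr // (block_mxEur, block_mxEdl) mxE.
Qed.

Definition block3_index (n1 n2 k : nat) : nat := (n1 <= k) + (n1 + n2 <= k).

Lemma block_diagonal_block_mx3 (K : nmodType) n1 n2 n3 (A : 'M[K]_n1)
    (B : 'M[K]_n2) (D : 'M[K]_n3) :
  block_diagonal (fun k : 'I_(n1 + n2 + n3) => block3_index n1 n2 k)
    (block_mx (block_mx A 0 0 B) 0 0 D).
Proof.
move=> k l; have [same_side|other_side] := eqVneq (k < n1 + n2)%N (l < n1 + n2)%N;
  last by move=> _; apply: block_diagonal_block_mx.
case: (split_ordP k) => {}k -> in same_side *;
  case: (split_ordP l) => {}l -> in same_side *;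
  rewrite /= ?ltn_ord ?ltnNge ?leq_addr //= in same_side *.
- rewrite block_mxEul /block3_index => Pkl; apply: block_diagonal_block_mx.
  move: Pkl; rewrite [(_ + _ <= k)%N]leqNgt [(_ + _ <= l)%N]leqNgt !ltn_ord.
  by rewrite [(n1 <= k)%N]leqNgt [(n1 <= l)%N]leqNgt; case: (k < n1)%N; case: (l < n1)%N.
- by rewrite /block3_index /= !leq_addr !(leq_trans (leq_addr _ _) (leq_addr _ _)) eqxx.
Qed.

Section Unitary.
Variable R : realType.
Local Notation C := R[i].

Lemma adjmxM m n p (A : 'M[C]_(m, n)) (B : 'M[C]_(n, p)) :
  adjmx (A *m B) = adjmx B *m adjmx A.
Proof. by rewrite /adjmx map_mxM trmx_mul. Qed.

Lemma adjmx_tr m n (A : 'M[C]_(m, n)) : adjmx A^T = (adjmx A)^T.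
Proof. by apply/matrixP => i j; rewrite !mxE. Qed.

Lemma adjmxK m n (A : 'M[C]_(m, n)) : adjmx (adjmx A) = A.
Proof. by apply/matrixP => i j; rewrite !mxE conjcK. Qed.

Lemma adjmx_perm_mx n (s : {perm 'I_n}) : adjmx (perm_mx s : 'M[C]_n) = perm_mx s^-1.
Proof. by rewrite /adjmx map_perm_mx tr_perm_mx. Qed.

Lemma block_diagonal_adjmx (T : eqType) n (P : 'I_n -> T) (A : 'M[C]_n) :
  block_diagonal P A -> block_diagonal P (adjmx A).
Proof. by move=> dA k l Pkl; rewrite !mxE dA ?conjc0 // eq_sym. Qed.

Lemma unitary_mx_inv n (A : 'M[C]_n) : unitary_mx A -> adjmx A *m A = 1%:M.
Proof. exact: mulmx1C. Qed.

Lemma unitary_mxM n (A B : 'M[C]_n) :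
  unitary_mx A -> unitary_mx B -> unitary_mx (A *m B).
Proof.
rewrite /unitary_mx => uA uB.
by rewrite adjmxM mulmxA -(mulmxA A) uB mulmx1 uA.
Qed.

Lemma unitary_adjmx n (A : 'M[C]_n) : unitary_mx A -> unitary_mx (adjmx A).
Proof. by move=> uA; rewrite /unitary_mx adjmxK unitary_mx_inv. Qed.

Lemma unitary_tr n (A : 'M[C]_n) : unitary_mx A -> unitary_mx A^T.
Proof.
by move=> uA; rewrite /unitary_mx adjmx_tr -trmx_mul unitary_mx_inv // trmx1.
Qed.

Lemma unitary_perm_mx n (s : {perm 'I_n}) : unitary_mx (perm_mx s : 'M[C]_n).
Proof. by rewrite /unitary_mx adjmx_perm_mx -perm_mxM mulgV perm_mx1. Qed.

Lemma unitary_row_col_perm n (s t : {perm 'I_n}) (A : 'M[C]_n) :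
  unitary_mx A -> unitary_mx (row_perm s (col_perm t A)).
Proof.
move=> uA; rewrite row_permE col_permE.
exact: unitary_mxM (unitary_perm_mx s) (unitary_mxM uA (unitary_perm_mx _)).
Qed.

Lemma unitary_castmx m n (e : m = n) (A : 'M[C]_m) :
  unitary_mx A -> unitary_mx (castmx (e, e) A).
Proof. by case: n / e; rewrite castmx_id. Qed.

Lemma unitary_block_mx m n (A : 'M[C]_m) (B : 'M[C]_n) :
  unitary_mx A -> unitary_mx B -> unitary_mx (block_mx A 0 0 B).
Proof.
rewrite /unitary_mx /adjmx map_block_mx tr_block_mx !map_mx0 !trmx0 => uA uB.
by rewrite mulmx_block uA uB !mulmx0 !mul0mx !addr0 !add0r scalar_mx_block.
Qed.

Lemma unitary_row_neq0 n (A : 'M[C]_n) i : unitary_mx A -> row i A != 0.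
Proof.
move=> uA; apply/negP => /eqP rowA0.
have /matrixP/(_ i i) := uA; rewrite !mxE eqxx mulr1n big1 => [/eqP|j _].
  by rewrite eq_sym oner_eq0.
by have /matrixP/(_ 0 j) := rowA0; rewrite !mxE => ->; rewrite mul0r.
Qed.

Lemma in_On_orthogonal n (y : 'M[C]_n) : in_On y -> y *m y^T = 1%:M.
Proof.
by case=> Q [QQt ->]; rewrite map_trmx -(map_mxM (real_complex R)) QQt map_mx1.
Qed.

Lemma in_On_adjmx n (y : 'M[C]_n) : in_On y -> adjmx y = y^T.
Proof. by case=> Q [_ ->]; apply/matrixP => i j; rewrite !mxE conjc_real. Qed.

Lemma in_On_unitary n (y : 'M[C]_n) : in_On y -> unitary_mx y.
Proof. by move=> yO; rewrite /unitary_mx in_On_adjmx // in_On_orthogonal. Qed.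
End Unitary.

Section DoubleCoset.
Variables (R : realType) (n1 n2 n3 p q n : nat).
Variables (eL : (n1 + n2 + n3 = n)%N) (eH : (p + q = n)%N).
Local Notation C := R[i].

Definition in_LOH (g : 'M[C]_n) : Prop :=
  exists x y z, [/\ in_L eL x, in_On y, in_H eH z & g = x *m y *m z].

Lemma in_L_unitary (x : 'M[C]_n) : in_L eL x -> unitary_mx x.
Proof.
case=> A [B [D [uA uB uD ->]]].
by apply/unitary_castmx/unitary_block_mx/uD/unitary_block_mx.
Qed.

Lemma in_L_block_diagonal (x : 'M[C]_n) :
  in_L eL x -> block_diagonal (fun k : 'I_n => block3_index n1 n2 k) x.
Proof.
case=> A [B [D [_ _ _ ->]]].
exact: (block_diagonal_castmx (P := block3_index n1 n2) _ (block_diagonal_block_mx3 _ _ _)).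
Qed.

Lemma in_H_unitary (z : 'M[C]_n) : in_H eH z -> unitary_mx z.
Proof. by case=> A [B [uA uB ->]]; apply/unitary_castmx/unitary_block_mx. Qed.

Lemma in_H_block_diagonal (z : 'M[C]_n) :
  in_H eH z -> block_diagonal (fun k : 'I_n => (k < p)%N) z.
Proof.
case=> A [B [_ _ ->]].
exact: (block_diagonal_castmx (P := fun k => (k < p)%N) _ (block_diagonal_block_mx _ _)).
Qed.

Lemma in_LOH_unitary (x y z : 'M[C]_n) :
  in_L eL x -> in_On y -> in_H eH z -> unitary_mx (x *m y *m z).
Proof.
move=> /in_L_unitary ux /in_On_unitary uy /in_H_unitary uz.
exact: unitary_mxM (unitary_mxM ux uy) uz.
Qed.

Lemma in_LOH_conj (g : 'M[C]_n) : in_LOH g ->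
  exists A : 'M[C]_n, [/\ unitary_mx A,
    block_diagonal (fun k : 'I_n => (k < p)%N) A &
    block_diagonal (fun k : 'I_n => block3_index n1 n2 k) (g *m A *m g^T)].
Proof.
case=> x [y [z [xL yO zH ->]]]; have uz := in_H_unitary zH.
have dz := block_diagonal_adjmx (in_H_block_diagonal zH).
have dx := in_L_block_diagonal xL.
exists (adjmx z *m (adjmx z)^T); split.
- exact: unitary_mxM (unitary_adjmx uz) (unitary_tr (unitary_adjmx uz)).
- exact: block_diagonal_mul dz (block_diagonal_tr dz).
have zz : z *m adjmx z = 1%:M := uz.
have zzT : (adjmx z)^T *m z^T = 1%:M by rewrite -trmx_mul zz trmx1.
suff -> : x *m y *m z *m (adjmx z *m (adjmx z)^T) *m (x *m y *m z)^T = x *m x^T.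
  exact: block_diagonal_mul dx (block_diagonal_tr dx).
rewrite !trmx_mul !mulmxA -(mulmxA _ z) zz mulmx1 -(mulmxA _ (adjmx z)^T) zzT.
by rewrite mulmx1 -(mulmxA x) (in_On_orthogonal yO) mulmx1.
Qed.
End DoubleCoset.

Section Hadamard6.
Variable R : realType.
Local Notation C := R[i].

Definition imag_unit : C := 'i%C.
Local Notation J := imag_unit.
(* Keep [simpl] away from J and from conjugates of constants, so that [ring]
   sees J as an atom. *)
Arguments imag_unit : simpl never.
Local Arguments conjc : simpl never.

Lemma imag_unit_sqr : J * J = -1.
Proof. by rewrite -expr2 sqr_i. Qed.

Lemma imag_unit_sqr_add1 : J * J + 1 = 0.
Proof. by rewrite imag_unit_sqr addNr. Qed.

Lemma conjc_imag_unit : J^*%C = - J.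
Proof. by apply/eqP; rewrite eq_complex /= oppr0 !eqxx. Qed.

Lemma conjcN (x : C) : (- x)^*%C = - x^*%C.
Proof. exact: rmorphN. Qed.

Definition had6_coef (i j : nat) : C :=
  match i, j with
  | 0, 0 => 1 | 0, 1 => J | 0, 2 => J | 0, 3 => -1 | 0, 4 => 1 | 0, _ => - J
  | 1, 0 => 1 | 1, 1 => -1 | 1, 2 => 1 | 1, 3 => 1 | 1, 4 => - J | 1, _ => 1
  | 2, 0 => 1 | 2, 1 => - J | 2, 2 => -1 | 2, 3 => - J | 2, 4 => - J | 2, _ => -1
  | 3, 0 => 1 | 3, 1 => -1 | 3, 2 => - J | 3, 3 => J | 3, 4 => J | 3, _ => -1
  | 4, 0 => 1 | 4, 1 => 1 | 4, 2 => -1 | 4, 3 => J | 4, 4 => -1 | 4, _ => 1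
  | _, 0 => 1 | _, 1 => 1 | _, 2 => 1 | _, 3 => - J | _, 4 => J | _, _ => J
  end.

Definition had6 : 'M[C]_6 := \matrix_(i, j) had6_coef i j.

Lemma had6_unitary : had6 *m adjmx had6 = 6%:R%:M.
Proof.
apply/matrixP => i j; rewrite !mxE !big_ord_recr big_ord0 /= !mxE.
case: i => [[|[|[|[|[|[|i]]]]]] ?] //; case: j => [[|[|[|[|[|[|j]]]]]] ?] //=;
  rewrite ?(conjcN, conjc1, conjc_imag_unit, opprK, mulrN, mulNr, mulr1, mul1r,
            imag_unit_sqr, mulr1n, mulr0n); ring.
Qed.

Definition half_diag (f : nat -> nat -> C) (a b : nat) : C :=
  if (a < 3)%N == (b < 3)%N then f a b else 0.

Definition had6_conj_coef (f : nat -> nat -> C) (i j : nat) : C :=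
  \sum_(0 <= a < 6) \sum_(0 <= b < 6) had6_coef i a * half_diag f a b * had6_coef j b.

Definition had6_mul_coef (u : nat -> C) (i : nat) : C :=
  had6_coef i 0 * u 0%N + had6_coef i 1 * u 1%N + had6_coef i 2 * u 2%N.

Lemma nat_mulr_eq0 (k : nat) (x : C) : (0 < k)%N -> k%:R * x = 0 -> x = 0.
Proof. by move=> k_gt0 /eqP; rewrite mulf_eq0 pnatr_eq0 eqn0Ngt k_gt0 => /eqP. Qed.

(* In the certificates below, [ring] knows nothing about J, so each one also
   carries a multiple of J * J + 1, which is zero. *)
Lemma had6_mul_coef_eq0 (u : nat -> C) (b : nat) :
  (forall i, (i < 6)%N -> i./2 != b -> had6_mul_coef u i = 0) -> u 0%N = 0.
Proof.
set E := had6_mul_coef u => Eb0; apply: (@nat_mulr_eq0 10) => //.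
case: b Eb0 => [|[|b]] Eb0.
- have -> : 10 * u 0%N = (-5 - 5 * J) * E 2 + (5 + 5 * J) * E 3 + 10 * E 4
      + (J * J + 1) * (- 5 * u 1%N + 5 * u 2%N).
    by rewrite /E /had6_mul_coef /=; ring.
  by rewrite !Eb0 // imag_unit_sqr_add1; ring.
- have -> : 10 * u 0%N = 5 * E 1 + 5 * E 4 by rewrite /E /had6_mul_coef /=; ring.
  by rewrite !Eb0 //; ring.
- have -> : 10 * u 0%N = (3 - J) * E 0 + (3 - J) * E 1 + (4 + 2 * J) * E 2
      + (J * J + 1) * (3 * u 1%N + u 2%N).
    by rewrite /E /had6_mul_coef /=; ring.
  by rewrite !Eb0 // imag_unit_sqr_add1; ring.
Qed.

Lemma had6_conj_coef_eq0 (f : nat -> nat -> C) :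
  (forall i j, (i < 6)%N -> (j < 6)%N -> i./2 != j./2 -> had6_conj_coef f i j = 0) ->
  [/\ f 0%N 0%N = 0, f 0%N 1%N = 0 & f 0%N 2%N = 0].
Proof.
set E := had6_conj_coef f => E0.
have K0 : 24 * f 0%N 0%N =
    (2 - J) * E 0 2 + E 0 3 + (1 - J) * E 0 4
    + 4 * E 0 5 - 3 * J * E 1 2 + (3 - 2 * J) * E 1 3
    + (-1 + J) * E 1 4 + (2 - 2 * J) * E 1 5
    + (2 + J) * E 2 0 + (2 + J) * E 2 1 + 2 * E 2 4
    + (4 - 2 * J) * E 2 5 + (1 + 2 * J) * E 3 0
    + (-3 + 2 * J) * E 3 1 + 2 * J * E 3 4 + 2 * E 3 5
    + (1 + 3 * J) * E 4 0 + (1 - J) * E 4 1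
    + (J * J + 1) * (- 10 * f 0%N 1%N - 8 * f 0%N 2%N + 2 * f 1%N 0%N
        + 4 * f 1%N 1%N + f 1%N 2%N + f 1%N 2%N * J + 8 * f 2%N 0%N
        + 5 * f 2%N 1%N + f 2%N 1%N * J + 2 * f 2%N 2%N + 2 * f 2%N 2%N * J
        - 2 * f 3%N 4%N - 2 * f 3%N 4%N * J + 2 * f 3%N 5%N + 2 * f 3%N 5%N * J
        + 4 * f 4%N 3%N * J + 2 * f 4%N 4%N - 2 * f 4%N 4%N * J + 3 * f 4%N 5%N
        - 3 * f 4%N 5%N * J - 4 * f 5%N 3%N - f 5%N 4%N + f 5%N 4%N * J
        + 4 * f 5%N 5%N).
  by rewrite /E /had6_conj_coef unlock /= /half_diag /=; ring.
have K1 : 24 * f 0%N 1%N =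
    2 * E 0 2 - 2 * J * E 0 3 + (2 + 2 * J) * E 0 4 - 2 * E 1 2
    + (-8 + 2 * J) * E 1 3 + (2 - 2 * J) * E 1 4 + 4 * E 1 5 + 2 * E 2 0
    - 2 * E 2 1 + (2 + 2 * J) * E 2 4 + (-2 + 2 * J) * E 2 5
    + (-4 + 2 * J) * E 3 0 + (4 - 2 * J) * E 3 1 + (2 + 2 * J) * E 3 4
    + (2 - 2 * J) * E 3 5 + (-2 - 6 * J) * E 4 0 + (-2 + 2 * J) * E 4 1
    + (J * J + 1) * (4 * f 0%N 1%N + 4 * f 0%N 2%N + 4 * f 1%N 0%N
        + 12 * f 1%N 1%N + 10 * f 1%N 2%N - 2 * f 1%N 2%N * J - 10 * f 2%N 1%N
        + 2 * f 2%N 1%N * J - 12 * f 2%N 2%N - 4 * f 3%N 3%N * J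
        + 4 * f 3%N 4%N * J - 12 * f 3%N 5%N - 4 * f 4%N 3%N * J
        + 4 * f 4%N 4%N * J - 2 * f 4%N 5%N + 6 * f 4%N 5%N * J + 4 * f 5%N 3%N
        - 2 * f 5%N 4%N - 2 * f 5%N 4%N * J - 4 * f 5%N 5%N).
  by rewrite /E /had6_conj_coef unlock /= /half_diag /=; ring.
have K2 : 24 * f 0%N 2%N =
    2 * J * E 0 2 + 2 * E 0 3 + (-2 + 2 * J) * E 0 4 - 2 * J * E 1 2
    - 2 * E 1 3 + (-2 - 2 * J) * E 1 4 + 4 * E 1 5 - 2 * J * E 2 0
    + 2 * J * E 2 1 + (-2 + 2 * J) * E 2 4 + (-2 - 2 * J) * E 2 5
    - 2 * E 3 0 + 2 * E 3 1 + (-2 + 2 * J) * E 3 4 + (2 + 2 * J) * E 3 5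
    + (2 - 6 * J) * E 4 0 + (2 + 2 * J) * E 4 1
    + (J * J + 1) * (8 * f 0%N 1%N + 8 * f 0%N 2%N - 4 * f 1%N 0%N
        + 4 * f 1%N 1%N + 10 * f 1%N 2%N - 2 * f 1%N 2%N * J - 10 * f 2%N 1%N
        + 2 * f 2%N 1%N * J - 4 * f 2%N 2%N + 4 * f 3%N 3%N * J
        - 4 * f 3%N 4%N * J - 4 * f 3%N 5%N - 8 * f 3%N 5%N * J
        + 4 * f 4%N 3%N * J - 4 * f 4%N 4%N * J + 6 * f 4%N 5%N
        - 2 * f 4%N 5%N * J + 4 * f 5%N 3%N - 2 * f 5%N 4%N - 2 * f 5%N 4%N * J
        - 4 * f 5%N 5%N).
  by rewrite /E /had6_conj_coef unlock /= /half_diag /=; ring.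
split; apply: (@nat_mulr_eq0 24) => //; [rewrite K0 | rewrite K1 | rewrite K2];
  by rewrite !E0 // imag_unit_sqr_add1; ring.
Qed.

Lemma had6_conj_coefE (X : 'M[C]_6) (f : nat -> nat -> C) :
  (forall a b : 'I_6, X a b = half_diag f a b) ->
  forall i j : 'I_6, (had6 *m X *m had6^T) i j = had6_conj_coef f i j.
Proof.
move=> Xf i j; rewrite mxE /had6_conj_coef big_mkord.
under eq_bigr do rewrite mxE big_distrl.
rewrite exchange_big; apply: eq_bigr => a _; rewrite big_mkord.
by apply: eq_bigr => b _; rewrite !mxE Xf.
Qed.

Lemma had6_mul_coefE (y : 'cV[C]_6) (u : nat -> C) :
  (forall a : 'I_6, y a 0 = if (a < 3)%N then u a else 0) ->
  forall i : 'I_6, (had6 *m y) i 0 = had6_mul_coef u i.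
Proof.
move=> yu i; rewrite mxE !big_ord_recr big_ord0 !mxE !yu /had6_mul_coef /=.
ring.
Qed.

Lemma had6_conj_row0 (X : 'M[C]_6) :
  block_diagonal (fun a : 'I_6 => (a < 3)%N) X ->
  block_diagonal (fun i : 'I_6 => i./2) (had6 *m X *m had6^T) ->
  forall j, X 0 j = 0.
Proof.
move=> dX dMX; pose f a b := X (inord a) (inord b).
have Xf a b : X a b = half_diag f a b.
  rewrite /half_diag; case: eqP => [_|/eqP ab]; last exact: dX.
  by rewrite /f !inord_val.
have [f00 f01 f02] : [/\ f 0%N 0%N = 0, f 0%N 1%N = 0 & f 0%N 2%N = 0].
  apply: had6_conj_coef_eq0 => i j i6 j6 ij.
  have := had6_conj_coefE Xf (inord i) (inord j).
  by rewrite !inordK // => <-; apply: dMX; rewrite !inordK.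
move=> j; rewrite Xf /half_diag /=; case: ifP => // j3.
by case: j j3 => [[|[|[|j]]] ?] //= _.
Qed.

Lemma had6_col0 (y : 'cV[C]_6) (b : nat) :
  (forall a : 'I_6, (3 <= a)%N -> y a 0 = 0) ->
  (forall i : 'I_6, i./2 != b -> (had6 *m y) i 0 = 0) -> y 0 0 = 0.
Proof.
move=> y_low My; pose u a := y (inord a) 0.
have yu (a : 'I_6) : y a 0 = if (a < 3)%N then u a else 0.
  by case: ltnP => [_|/y_low //]; rewrite /u inord_val.
have <- : inord 0 = 0 :> 'I_6 by apply/val_inj; rewrite /= inordK.
apply: (@had6_mul_coef_eq0 u b) => i i6 ib.
by have := had6_mul_coefE yu (inord i); rewrite inordK // => <-; apply: My; rewrite inordK.
Qed.

Definition had6_scale : C := ((Num.sqrt (6%:R : R))^-1)%:C%C.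

Lemma had6_scale_sqr : had6_scale ^+ 2 * 6%:R = 1.
Proof.
rewrite /had6_scale -rmorphXn -(rmorph_nat (real_complex R)) -rmorphM /=.
by rewrite exprVn sqr_sqrtr ?ler0n // mulVf ?pnatr_eq0.
Qed.

Lemma conjc_had6_scale : had6_scale^*%C = had6_scale.
Proof. exact: conjc_real. Qed.

Lemma had6_scale_neq0 : had6_scale != 0.
Proof.
apply: contra_eq_neq had6_scale_sqr => ->.
by rewrite expr0n mul0r eq_sym oner_neq0.
Qed.

Definition witness m : 'M[C]_(6 + m) := block_mx (had6_scale *: had6) 0 0 1%:M.

Lemma witness_unitary m : unitary_mx (witness m).
Proof.
apply: unitary_block_mx; last by rewrite /unitary_mx /adjmx map_mx1 trmx1 mulmx1.
rewrite /unitary_mx /adjmx map_mxZ linearZ /= conjc_had6_scale -scalemxAl -scalemxAr.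
by rewrite scalerA -expr2 [_ *m _]had6_unitary scale_scalar_mx had6_scale_sqr.
Qed.

Lemma witness_conj m (A : 'M[C]_(6 + m)) :
  witness m *m A *m (witness m)^T =
  block_mx (had6_scale ^+ 2 *: (had6 *m ulsubmx A *m had6^T))
           (had6_scale *: (had6 *m ursubmx A))
           (had6_scale *: (dlsubmx A *m had6^T)) (drsubmx A).
Proof.
rewrite /witness -{1}[A]submxK mulmx_block tr_block_mx !trmx0 trmx1 mulmx_block.
rewrite !mul0mx !mulmx0 !mul1mx !mulmx1 !addr0 !add0r linearZ /=.
by rewrite -!scalemxAl -!scalemxAr scalerA -expr2.
Qed.

Lemma witness_row0 m (A : 'M[C]_(6 + m)) (hp : 'I_(6 + m) -> bool)
    (lb : 'I_(6 + m) -> nat) :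
  (forall i : 'I_6, hp (lshift m i) = (i < 3)%N) ->
  (forall i : 'I_6, lb (lshift m i) = i./2) ->
  block_diagonal hp A -> block_diagonal lb (witness m *m A *m (witness m)^T) ->
  row (lshift m 0) A = 0.
Proof.
move=> hp_l lb_l dA; rewrite witness_conj => dW.
have scale_eq0 (c : C) k (x : C) : c != 0 -> c ^+ k * x = 0 -> x = 0.
  by move=> c0 /eqP; rewrite mulf_eq0 expf_eq0 (negPf c0) andbF => /eqP.
have row_ul := @had6_conj_row0 (ulsubmx A).
apply/rowP => j; rewrite !mxE; case: (split_ordP j) => {}j ->.
  transitivity (ulsubmx A 0 j); first by rewrite !mxE.
  apply: row_ul => [a b ab | i {}j ij]; first by rewrite !mxE dA ?hp_l.
  apply: (scale_eq0 _ 2 _ had6_scale_neq0).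
  by have := dW (lshift m i) (lshift m j); rewrite !lb_l block_mxEul mxE => ->.
have [hp_j|hp_j] := boolP (hp (rshift 6 j)); last by rewrite dA // hp_l (negPf hp_j).
transitivity (col j (ursubmx A) 0 0); first by rewrite !mxE.
apply: (@had6_col0 _ (lb (rshift 6 j))) => [a a3 | i ib].
  by rewrite !mxE dA // hp_l hp_j ltnNge a3.
rewrite !colE mulmxA -colE mxE.
apply: (scale_eq0 _ 1 _ had6_scale_neq0); rewrite expr1.
by have := dW (lshift m i) (rshift 6 j); rewrite lb_l block_mxEur mxE => ->.
Qed.
End Hadamard6.

Definition row_pick (n1 n2 i : nat) : nat :=
  match i with
  | 0 => 0 | 1 => 1 | 2 => n1 | 3 => n1 + 1 | 4 => n1 + n2 | _ => n1 + n2 + 1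
  end.

Definition col_pick (p i : nat) : nat :=
  match i with 0 => 0 | 1 => 1 | 2 => 2 | 3 => p | 4 => p + 1 | _ => p + 2 end.

Lemma exists_perm_pick m (pick : nat -> nat) :
  (forall i, i < 6 -> pick i < 6 + m)%N ->
  (forall i j, i < 6 -> j < 6 -> pick i = pick j -> i = j)%N ->
  exists s : {perm 'I_(6 + m)}, forall i : 'I_6, val (s^-1%g (lshift m i)) = pick i.
Proof.
move=> lt_pick pick_inj; pose f (i : 'I_6) := Ordinal (lt_pick i (ltn_ord i)).
have f_inj : injective f.
  by move=> i j /(congr1 val)/(pick_inj _ _ (ltn_ord i) (ltn_ord j))/val_inj.
have [s fs] := perm_extend_inj f_inj (@lshift_inj 6 m).
by exists s => i; rewrite -fs permK.
Qed.

Lemma exists_unitary_notin_LOH (R : realType) (n1 n2 n3 p q n : nat)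
    (eL : (n1 + n2 + n3 = n)%N) (eH : (p + q = n)%N) :
  (2 <= n1)%N -> (2 <= n2)%N -> (2 <= n3)%N -> (3 <= p)%N -> (3 <= q)%N ->
  exists g : 'M[R[i]]_n, unitary_mx g /\ ~ in_LOH eL eH g.
Proof.
move=> n1_ge2 n2_ge2 n3_ge2 p_ge3 q_ge3.
have [m n_eq] : exists m, (6 + m)%N = n by exists (n - 6)%N; lia.
case: n / n_eq in eL eH *.
have row_lt i : (i < 6 -> row_pick n1 n2 i < 6 + m)%N.
  by case: i => [|[|[|[|[|[|i]]]]]] //= _; lia.
have row_inj i j : (i < 6 -> j < 6 -> row_pick n1 n2 i = row_pick n1 n2 j -> i = j)%N.
  by case: i j => [|[|[|[|[|[|i]]]]]] [|[|[|[|[|[|j]]]]]] //= _ _; lia.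
have col_lt i : (i < 6 -> col_pick p i < 6 + m)%N.
  by case: i => [|[|[|[|[|[|i]]]]]] //= _; lia.
have col_inj i j : (i < 6 -> j < 6 -> col_pick p i = col_pick p j -> i = j)%N.
  by case: i j => [|[|[|[|[|[|i]]]]]] [|[|[|[|[|[|j]]]]]] //= _ _; lia.
have [s s_row] := exists_perm_pick row_lt row_inj.
have [t t_col] := exists_perm_pick col_lt col_inj.
exists (row_perm s (col_perm t (witness R m))).
split; first exact/unitary_row_col_perm/witness_unitary.
case/in_LOH_conj => A [uA dA dgA].
have /eqP[] := unitary_row_neq0 (lshift m 0) (unitary_row_col_perm t^-1 t^-1 uA).
apply: (witness_row0 (hp := fun k => ((t^-1)%g k < p)%N)
                     (lb := fun k => block3_index n1 n2 ((s^-1)%g k))).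
- by move=> i; rewrite t_col; case: i => [[|[|[|[|[|[|i]]]]]] ?] //=; lia.
- by move=> i; rewrite s_row /block3_index; case: i => [[|[|[|[|[|[|i]]]]]] ?] //=; lia.
- exact: block_diagonal_perm dA.
- by rewrite -(row_col_perm_conj _ _ s); exact: block_diagonal_perm dgA.
Qed.

Theorem proposition6p5 (R : realType) (n1 n2 n3 p q n : nat)
  (eL : (n1 + n2 + n3 = n)%N) (eH : (p + q = n)%N) :
  (0 < n1)%N -> (0 < n2)%N -> (0 < n3)%N -> (0 < p)%N -> (0 < q)%N ->
  (3 <= minn p q)%N -> (2 <= minn n1 (minn n2 n3))%N ->
  (* L G' H is a subset of G = U(n) ... *)
  (forall x y z : 'M[R[i]]_n, in_L eL x -> in_On y -> in_H eH z ->
     unitary_mx (x *m y *m z)) /\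
  (* ... and a proper one *)
  (exists g : 'M[R[i]]_n, unitary_mx g /\
     ~ (exists x y z : 'M[R[i]]_n,
          [/\ in_L eL x, in_On y, in_H eH z & g = x *m y *m z])).
Proof.
move=> _ _ _ _ _ pq_ge3 n_ge2; split; first exact: in_LOH_unitary.
apply: exists_unitary_notin_LOH; lia.
Qed.
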